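(* Fix a positive integer $N$. For every $\epsilon>0$ there exists $K_\epsilon>0$ such that for every Riemann integrable $\varphi:\mathbb T\to\mathbb C$, $$\limsup_{\substack{q\to\infty\\ d(q)\le N}}\frac{1}{\phi(q)}\Big|\big\{p\in\mathbb Z_q^\times: q^{-1/2}|g_\varphi(p,q)|>K_\epsilon\big\}\Big|\le\epsilon\,\|\varphi\|_2^2 .$$
   Context: $\mathbb T=\mathbb R/\mathbb Z$; $\|\varphi\|_2$ is the $L^2(\mathbb T)$ norm. $d(q)$ is the number of positive divisors of $q$. $\mathbb Z_q^\times=\{p\in\{1,\dots,q\}:\gcd(p,q)=1\}$, $\phi(q)=|\mathbb Z_q^\times|$. $e_q(x)=e^{2\pi i x/q}$ and $g_\varphi(p,q)=\sum_{h=0}^{q-1}\varphi(h/q)\,e_q(ph^2)$. *)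

From Stdlib Require Import Reals List Arith.
From Coquelicot Require Import Coquelicot.
Import ListNotations.
Open Scope R_scope.

Definition ndiv (q : nat) : nat :=
  length (filter (fun d => Nat.eqb (q mod d) 0) (seq 1 q)).

Definition units_list (q : nat) : list nat :=
  filter (fun p => Nat.eqb (Nat.gcd p q) 1) (seq 1 q).

Definition eulerphi (q : nat) : nat := length (units_list q).

Definition eq_ (q : nat) (x : R) : C :=
  (cos (2 * PI * x / INR q), sin (2 * PI * x / INR q)).

Fixpoint Csum (n : nat) (f : nat -> C) : C :=
  match n with
  | O => 0%C
  | S m => Cplus (Csum m f) (f m)
  end.

(* g_phi(p,q) = sum_{h=0}^{q-1} phi(h/q) e_q(p h^2) *)
Definition gauss (phi : R -> C) (p q : nat) : C :=
  Csum q (fun h => Cmult (phi (INR h / INR q)) (eq_ q (INR (p * h * h)))).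

(* ||phi||_2^2 on T = R/Z, identified with [0,1] *)
Definition L2sq (phi : R -> C) : R := RInt (fun x => (Cmod (phi x)) ^ 2) 0 1.

Definition large_count (phi : R -> C) (K : R) (q : nat) : nat :=
  length (filter (fun p => if Rlt_dec K (Cmod (gauss phi p q) / sqrt (INR q))
                           then true else false) (units_list q)).

(* functions on T = R/Z: 1-periodic functions R -> C *)
Definition periodic1 (phi : R -> C) : Prop := forall x, phi (x + 1) = phi x.

From Stdlib Require Import Reals Lra List RList Lia ZArith Znumtheory Bool.
From Coquelicot Require Import Coquelicot.
From mathcomp Require ssreflect ssrbool eqtype ssrnat seq div prime bigop.
Open Scope R_scope.

(** By orthogonality of the additive characters, the second moment
    [sum_(p mod q) |g(p,q)|^2] equals [q] times the sum of [phi(h/q) conj(phi(h'/q))]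
    over the pairs with [h^2 = h'^2 (mod q)], hence by AM-GM it is at most
    [q sum_h |phi(h/q)|^2 #{x : x^2 = h^2 (mod q)}].  Sorting the square roots [x] of
    [h^2] by [G = gcd(x - h, q)], a class has at most [e = gcd(G, q/G)] elements and is
    empty unless [e | 2h], hence unless [d | h] with [d = e / gcd(e, 2)].  The second
    moment is thus at most [2 q^2] times a sum of [d(q)] Riemann sums of [|phi|^2] with
    [q/d >= sqrt q] points, i.e. [<= 2 d(q) q^2 (||phi||_2^2 + o(1))].  Chebyshev's
    inequality and [phi(q) >= q / 2^omega(q) >= q / 2^N] conclude, with [K^2 = 2 N 2^N / eps]. *)

Fixpoint rsum (n : nat) (f : nat -> R) : R :=
  match n with O => 0 | S k => rsum k f + f k end.

Lemma rsum_ext n f g : (forall i, (i < n)%nat -> f i = g i) -> rsum n f = rsum n g.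
Proof.
  induction n; intros H; simpl; auto.
  rewrite IHn by (intros; apply H; lia); rewrite H by lia; reflexivity.
Qed.

Lemma rsum_le n f g : (forall i, (i < n)%nat -> f i <= g i) -> rsum n f <= rsum n g.
Proof.
  induction n; intros H; simpl; [lra|].
  apply Rplus_le_compat; [apply IHn; intros; apply H|apply H]; lia.
Qed.

Lemma rsum_scal n f c : rsum n (fun i => c * f i) = c * rsum n f.
Proof. induction n; simpl; [ring|rewrite IHn; ring]. Qed.

Lemma rsum_plus n f g : rsum n (fun i => f i + g i) = rsum n f + rsum n g.
Proof. induction n; simpl; [ring|rewrite IHn; ring]. Qed.

Lemma rsum_0 n : rsum n (fun _ => 0) = 0.
Proof. induction n; simpl; [auto|rewrite IHn; ring]. Qed.

Lemma rsum_Sl n f : rsum (S n) f = f O + rsum n (fun i => f (S i)).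
Proof. induction n; simpl in *; [ring|rewrite IHn; ring]. Qed.

Lemma rsum_add a b f : rsum (a + b) f = rsum a f + rsum b (fun i => f (a + i)%nat).
Proof.
  induction b; simpl; [rewrite Nat.add_0_r; ring|].
  rewrite Nat.add_succ_r; simpl; rewrite IHb; ring.
Qed.

Lemma rsum_swap n m F :
  rsum n (fun i => rsum m (fun j => F i j)) = rsum m (fun j => rsum n (fun i => F i j)).
Proof.
  induction n; simpl.
  - symmetry; apply rsum_0.
  - rewrite IHn, <- rsum_plus; reflexivity.
Qed.

Lemma rsum_indicator n (P : nat -> bool) :
  rsum n (fun x => if P x then 1 else 0) = INR (length (filter P (seq 0 n))).
Proof.
  induction n; [reflexivity|].
  simpl rsum; rewrite seq_S, filter_app, length_app, plus_INR, IHn; simpl.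
  destruct (P n); simpl; ring.
Qed.

Definition lsum (l : list nat) (w : nat -> R) : R := fold_right (fun g acc => w g + acc) 0 l.

Lemma lsum_ext l v w : (forall g, In g l -> v g = w g) -> lsum l v = lsum l w.
Proof. induction l; simpl; intros H; [reflexivity|]. rewrite H, IHl; auto. Qed.

Lemma lsum_le l v w : (forall g, In g l -> v g <= w g) -> lsum l v <= lsum l w.
Proof. induction l; simpl; intros H; [lra|]. apply Rplus_le_compat; auto. Qed.

Lemma lsum_nonneg l w : (forall g, In g l -> 0 <= w g) -> 0 <= lsum l w.
Proof.
  induction l; simpl; intros H; [lra|].
  assert (0 <= w a) by auto. specialize (IHl (fun g Hg => H g (or_intror Hg))). lra.
Qed.

Lemma lsum_ge_term l w y : (forall g, In g l -> 0 <= w g) -> In y l -> w y <= lsum l w.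
Proof.
  induction l as [|a l IH]; simpl; intros H Hy; [contradiction|].
  destruct Hy as [<-|Hy].
  - assert (0 <= lsum l w) by (apply lsum_nonneg; auto). lra.
  - assert (0 <= w a) by auto. specialize (IH (fun g Hg => H g (or_intror Hg)) Hy). lra.
Qed.

Lemma lsum_scal l w c : lsum l (fun g => c * w g) = c * lsum l w.
Proof. induction l; simpl; [ring|rewrite IHl; ring]. Qed.

Lemma lsum_le_length l w c : (forall g, In g l -> w g <= c) -> lsum l w <= INR (length l) * c.
Proof.
  induction l; intros H; simpl lsum; simpl length; [simpl; lra|].
  rewrite S_INR. assert (w a <= c) by (apply H; simpl; auto).
  assert (lsum l w <= INR (length l) * c) by (apply IHl; intros; apply H; simpl; auto). lra.
Qed.

Lemma rsum_lsum n l F :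
  rsum n (fun i => lsum l (fun g => F i g)) = lsum l (fun g => rsum n (fun i => F i g)).
Proof.
  induction l; simpl; [apply rsum_0|].
  rewrite <- IHl, <- rsum_plus; reflexivity.
Qed.

Lemma lsum_seq n w : lsum (seq 0 n) w = rsum n w.
Proof.
  induction n; [reflexivity|].
  rewrite seq_S; simpl rsum; rewrite <- IHn; clear IHn; simpl.
  induction (seq 0 n) as [|a l IH]; simpl; [ring|rewrite IH; ring].
Qed.

Lemma lsum_filter_le (P : nat -> bool) l w :
  (forall x, 0 <= w x) -> lsum (filter P l) w <= lsum l w.
Proof.
  induction l; simpl; intros H; [lra|].
  specialize (IHl H). specialize (H a). destruct (P a); simpl; lra.
Qed.

Lemma length_filter_mul_le (P : nat -> bool) l w c :
  (forall x, 0 <= w x) -> (forall x, P x = true -> c <= w x) ->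
  INR (length (filter P l)) * c <= lsum l w.
Proof.
  induction l; simpl; intros H1 H2; [lra|]. specialize (IHl H1 H2).
  destruct (P a) eqn:E; simpl length; [rewrite S_INR|]; specialize (H1 a); [specialize (H2 a E)|]; lra.
Qed.

Lemma Csum_ext n f g : (forall i, (i < n)%nat -> f i = g i) -> Csum n f = Csum n g.
Proof.
  induction n; intros H; simpl; auto.
  rewrite IHn by (intros; apply H; lia); rewrite H by lia; reflexivity.
Qed.

Lemma RtoC_rsum n f : RtoC (rsum n f) = Csum n (fun i => RtoC (f i)).
Proof. induction n; simpl; [reflexivity|]. rewrite <- IHn. apply injective_projections; simpl; ring. Qed.

Lemma Csum_plus n f g : Csum n (fun i => f i + g i)%C = (Csum n f + Csum n g)%C.
Proof. induction n; simpl; [|rewrite IHn]; ring. Qed.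

Lemma Csum_scal_l n f c : Csum n (fun i => c * f i)%C = (c * Csum n f)%C.
Proof. induction n; simpl; [|rewrite IHn]; ring. Qed.

Lemma Csum_scal_r n f c : Csum n (fun i => f i * c)%C = (Csum n f * c)%C.
Proof. induction n; simpl; [|rewrite IHn]; ring. Qed.

Lemma Csum_conj n f : Cconj (Csum n f) = Csum n (fun i => Cconj (f i)).
Proof.
  induction n; simpl; [apply injective_projections; simpl; ring|].
  rewrite Cplus_conj, IHn; reflexivity.
Qed.

Lemma Csum_mul n m f g :
  (Csum n f * Csum m g)%C = Csum n (fun i => Csum m (fun j => f i * g j))%C.
Proof.
  rewrite <- Csum_scal_r. apply Csum_ext; intros i _. symmetry; apply Csum_scal_l.
Qed.

Lemma Csum_swap n m F :
  Csum n (fun i => Csum m (fun j => F i j)) = Csum m (fun j => Csum n (fun i => F i j)).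
Proof.
  induction n; simpl.
  - induction m; simpl; [auto|rewrite <- IHm; ring].
  - rewrite IHn, <- Csum_plus; reflexivity.
Qed.

Lemma Cmod_Csum_le n f : Cmod (Csum n f) <= rsum n (fun i => Cmod (f i)).
Proof.
  induction n; simpl; [rewrite Cmod_0; lra|].
  eapply Rle_trans; [apply Cmod_triangle|lra].
Qed.

Lemma Csum_const_1 n : Csum n (fun _ => RtoC 1) = RtoC (INR n).
Proof.
  induction n; [reflexivity|]. simpl Csum. rewrite IHn, S_INR.
  apply injective_projections; simpl; ring.
Qed.

(** * Additive characters *)

Lemma cos_period_Z x m : cos (x + 2 * IZR m * PI) = cos x.
Proof.
  destruct (Z_le_gt_dec 0 m) as [H|H].
  - rewrite <- (Z2Nat.id m), <- INR_IZR_INZ by lia. apply cos_period.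
  - replace x with ((x + 2 * IZR m * PI) + 2 * INR (Z.to_nat (- m)) * PI) at 2.
    + symmetry; apply cos_period.
    + rewrite INR_IZR_INZ, Z2Nat.id, opp_IZR by lia. ring.
Qed.

Lemma sin_period_Z x m : sin (x + 2 * IZR m * PI) = sin x.
Proof.
  destruct (Z_le_gt_dec 0 m) as [H|H].
  - rewrite <- (Z2Nat.id m), <- INR_IZR_INZ by lia. apply sin_period.
  - replace x with ((x + 2 * IZR m * PI) + 2 * INR (Z.to_nat (- m)) * PI) at 2.
    + symmetry; apply sin_period.
    + rewrite INR_IZR_INZ, Z2Nat.id, opp_IZR by lia. ring.
Qed.

Lemma cos_eq_1_period x : cos x = 1 -> exists m : Z, x = 2 * IZR m * PI.
Proof.
  intros H. assert (Hs : sin x = 0).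
  { assert (E := sin2_cos2 x). rewrite H in E. unfold Rsqr in E. nra. }
  destruct (sin_eq_0_0 x Hs) as [k Hk].
  destruct (Zeven_odd_dec k) as [He|Ho].
  - destruct (Zeven_ex k He) as [m Hm]. exists m. rewrite Hk, Hm, mult_IZR. ring.
  - exfalso. destruct (Zodd_ex k Ho) as [m Hm].
    rewrite Hk, Hm, plus_IZR, mult_IZR in H.
    replace ((2 * IZR m + 1) * PI) with (PI + 2 * IZR m * PI) in H by ring.
    rewrite cos_period_Z, cos_PI in H. lra.
Qed.

Lemma eq_add q x y : (eq_ q x * eq_ q y)%C = eq_ q (x + y).
Proof.
  unfold eq_, Cmult; simpl.
  replace (2 * PI * (x + y) / INR q) with (2 * PI * x / INR q + 2 * PI * y / INR q)
    by (unfold Rdiv; ring).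
  rewrite cos_plus, sin_plus. f_equal; ring.
Qed.

Lemma eq_conj q x : Cconj (eq_ q x) = eq_ q (- x).
Proof.
  unfold eq_, Cconj; simpl.
  replace (2 * PI * - x / INR q) with (- (2 * PI * x / INR q)) by (unfold Rdiv; ring).
  rewrite cos_neg, sin_neg. reflexivity.
Qed.

Lemma eq_0 q : eq_ q 0 = RtoC 1.
Proof.
  unfold eq_. replace (2 * PI * 0 / INR q) with 0 by (unfold Rdiv; ring).
  rewrite cos_0, sin_0. reflexivity.
Qed.

Lemma eq_nat_mul q t p : eq_ q (INR p * t) = Cpow (eq_ q t) p.
Proof.
  induction p; simpl Cpow.
  - rewrite Rmult_0_l. apply eq_0.
  - rewrite S_INR, <- IHp, eq_add. f_equal. ring.
Qed.

Lemma eq_multiple q m : (0 < q)%nat -> eq_ q (INR q * IZR m) = RtoC 1.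
Proof.
  intros Hq. unfold eq_.
  assert (INR q <> 0) by (apply not_0_INR; lia).
  replace (2 * PI * (INR q * IZR m) / INR q) with (0 + 2 * IZR m * PI) by (field; auto).
  rewrite cos_period_Z, sin_period_Z, cos_0, sin_0. reflexivity.
Qed.

Lemma eq_eq_1_divide q k : (0 < q)%nat -> eq_ q (IZR k) = RtoC 1 -> (Z.of_nat q | k)%Z.
Proof.
  intros Hq Hz. unfold eq_ in Hz. injection Hz as Hcos _.
  destruct (cos_eq_1_period _ Hcos) as [m Hm].
  exists m. apply eq_IZR. rewrite mult_IZR, <- INR_IZR_INZ.
  assert (INR q <> 0) by (apply not_0_INR; lia).
  assert (0 < PI) by apply PI_RGT_0.
  apply (Rmult_eq_reg_l (2 * PI / INR q)).
  - replace (2 * PI / INR q * IZR k) with (2 * PI * IZR k / INR q) by (field; auto).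
    rewrite Hm. field. auto.
  - apply Rmult_integral_contrapositive_currified; [lra|]. apply Rinv_neq_0_compat; auto.
Qed.

Lemma Csum_pow_root_of_unity (z : C) n :
  Cpow z n = RtoC 1 -> z <> RtoC 1 -> Csum n (Cpow z) = RtoC 0.
Proof.
  intros Hn Hz.
  assert (Hgeom : forall k, ((1 - z) * Csum k (Cpow z) = 1 - Cpow z k)%C).
  { induction k; simpl; [|rewrite Cmult_plus_distr_l, IHk]; ring. }
  assert (Hnz : (1 - z)%C <> RtoC 0).
  { intros E. apply Hz. apply injective_projections; injection E; simpl; lra. }
  transitivity (/ (1 - z) * ((1 - z) * Csum n (Cpow z)))%C; [field; auto|].
  rewrite Hgeom, Hn. ring.
Qed.

Lemma eq_orthogonality q (k : Z) : (0 < q)%nat ->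
  Csum q (Cpow (eq_ q (IZR k))) =
  if Z.eqb (k mod Z.of_nat q) 0 then RtoC (INR q) else RtoC 0.
Proof.
  intros Hq. destruct (Z.eqb_spec (k mod Z.of_nat q) 0) as [H|H].
  - apply Z.mod_divide in H as [m ->]; [|lia].
    replace (IZR (m * Z.of_nat q)) with (INR q * IZR m) by (rewrite mult_IZR, <- INR_IZR_INZ; ring).
    rewrite eq_multiple by auto. rewrite <- Csum_const_1. apply Csum_ext.
    intros i _. induction i; simpl; [reflexivity|]. rewrite IHi. ring.
  - apply Csum_pow_root_of_unity.
    + rewrite <- eq_nat_mul. apply eq_multiple; auto.
    + intros Hz. apply H, Z.mod_divide; [lia|]. apply eq_eq_1_divide; auto.
Qed.

(** * The second moment *)

Definition sq_congr (q h x : nat) : bool :=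
  Z.eqb ((Z.of_nat (h * h) - Z.of_nat (x * x)) mod Z.of_nat q) 0.

Lemma sq_congr_sym q h x : sq_congr q h x = sq_congr q x h.
Proof.
  unfold sq_congr.
  replace (Z.of_nat (x * x) - Z.of_nat (h * h))%Z
    with (- (Z.of_nat (h * h) - Z.of_nat (x * x)))%Z by ring.
  set (d := (Z.of_nat (h * h) - Z.of_nat (x * x))%Z).
  destruct (Z.eqb_spec (d mod Z.of_nat q) 0) as [E|E];
  destruct (Z.eqb_spec (- d mod Z.of_nat q) 0) as [E'|E']; auto; exfalso.
  - apply E', Z_mod_zero_opp_full, E.
  - apply E. rewrite <- (Z.opp_involutive d). apply Z_mod_zero_opp_full, E'.
Qed.

Lemma eq_sq_diff q p h x :
  (eq_ q (INR (p * h * h)) * Cconj (eq_ q (INR (p * x * x))))%C =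
  Cpow (eq_ q (IZR (Z.of_nat (h * h) - Z.of_nat (x * x)))) p.
Proof.
  rewrite eq_conj, eq_add, <- eq_nat_mul. f_equal.
  rewrite minus_IZR, <- !INR_IZR_INZ, !mult_INR. ring.
Qed.

Lemma gauss_moment_expand (phi : R -> C) q : (0 < q)%nat ->
  RtoC (rsum q (fun p => Cmod (gauss phi p q) ^ 2)) =
  Csum q (fun h => Csum q (fun x =>
    Cmult (Cmult (phi (INR h / INR q)) (Cconj (phi (INR x / INR q))))
      (if sq_congr q h x then RtoC (INR q) else RtoC 0))).
Proof.
  intros Hq. set (f := fun h => phi (INR h / INR q)). rewrite RtoC_rsum.
  transitivity (Csum q (fun p => Csum q (fun h => Csum q (fun x =>
    f h * Cconj (f x) * Cpow (eq_ q (IZR (Z.of_nat (h * h) - Z.of_nat (x * x)))) p))))%C.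
  - apply Csum_ext; intros p _. rewrite Cmod2_conj. unfold gauss.
    rewrite Csum_conj, Csum_mul. apply Csum_ext; intros h _. apply Csum_ext; intros x _.
    rewrite <- eq_sq_diff, Cmult_conj. fold (f h) (f x). ring.
  - rewrite Csum_swap. apply Csum_ext; intros h _.
    rewrite Csum_swap. apply Csum_ext; intros x _.
    rewrite Csum_scal_l, eq_orthogonality by auto. reflexivity.
Qed.

Lemma gauss_moment_le_pairs (phi : R -> C) q : (0 < q)%nat ->
  rsum q (fun p => Cmod (gauss phi p q) ^ 2) <=
  INR q * rsum q (fun h => rsum q (fun x =>
    if sq_congr q h x then Cmod (phi (INR h / INR q)) * Cmod (phi (INR x / INR q)) else 0)).
Proof.
  intros Hq. assert (HT := gauss_moment_expand phi q Hq).
  set (T := Csum q _) in HT.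
  replace (rsum q _) with (Re T) by (rewrite <- HT; reflexivity).
  eapply Rle_trans; [apply Rle_trans with (Rabs (Re T)); [apply Rle_abs|apply re_le_Cmod]|].
  unfold T. eapply Rle_trans; [apply Cmod_Csum_le|].
  rewrite <- rsum_scal. apply rsum_le; intros h _.
  eapply Rle_trans; [apply Cmod_Csum_le|].
  rewrite <- rsum_scal. apply rsum_le; intros x _.
  rewrite !Cmod_mult, Cmod_conj. destruct (sq_congr q h x).
  - rewrite Cmod_R, Rabs_right by (apply Rle_ge, pos_INR). lra.
  - rewrite Cmod_0. lra.
Qed.

(* Symmetrization of [a h * a x <= (a h ^ 2 + a x ^ 2) / 2]. *)
Lemma rsum_sym_pairs_le (r : nat -> nat -> bool) n (a : nat -> R) :
  (forall h x, r h x = r x h) ->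
  rsum n (fun h => rsum n (fun x => if r h x then a h * a x else 0)) <=
  rsum n (fun h => a h ^ 2 * rsum n (fun x => if r h x then 1 else 0)).
Proof.
  intros Hsym. set (D := fun h x => if r h x then a h ^ 2 else 0).
  assert (HD : rsum n (fun h => rsum n (fun x => D x h)) = rsum n (fun h => rsum n (fun x => D h x))).
  { rewrite rsum_swap. apply rsum_ext; intros h _; apply rsum_ext; intros x _.
    unfold D. rewrite Hsym. reflexivity. }
  apply Rle_trans with (rsum n (fun h => rsum n (fun x => / 2 * (D h x + D x h)))).
  - apply rsum_le; intros h _. apply rsum_le; intros x _. unfold D.
    rewrite (Hsym x h). destruct (r h x); [|lra].
    assert (0 <= (a h - a x) ^ 2) by apply pow2_ge_0. nra.
  - right. transitivity (rsum n (fun h => rsum n (fun x => D h x))).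
    + rewrite <- (Rmult_1_l (rsum n (fun h => rsum n (fun x => D h x)))).
      replace 1 with (/ 2 + / 2) by field. rewrite Rmult_plus_distr_r.
      rewrite <- HD at 2. rewrite <- !rsum_scal, <- rsum_plus.
      apply rsum_ext; intros h _. rewrite <- !rsum_scal, <- rsum_plus.
      apply rsum_ext; intros x _. ring.
    + apply rsum_ext; intros h _. rewrite <- rsum_scal.
      apply rsum_ext; intros x _. unfold D. destruct (r h x); ring.
Qed.

(** * Counting square roots modulo q *)

Definition divisors_list (q : nat) : list nat := filter (fun d => Nat.eqb (q mod d) 0) (seq 1 q).

Lemma ndiv_length q : ndiv q = length (divisors_list q).
Proof. reflexivity. Qed.

Lemma in_divisors_list q G : In G (divisors_list q) -> (0 < G <= q)%nat /\ Nat.divide G q.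
Proof.
  unfold divisors_list. intros H. apply filter_In in H as [H1 H2]. apply in_seq in H1.
  apply Nat.eqb_eq in H2. split; [lia|]. apply Nat.Lcm0.mod_divide, H2.
Qed.

Section SquareRootCount.
Local Open Scope Z_scope.

Lemma Z_gcd_pos_r a b : 0 < b -> 0 < Z.gcd a b.
Proof.
  intros Hb. assert (0 <= Z.gcd a b) by apply Z.gcd_nonneg.
  destruct (Z.eq_dec (Z.gcd a b) 0) as [E|E]; [apply Z.gcd_eq_0 in E|]; lia.
Qed.

Lemma Z_cofactor_divide (a b q : Z) : 0 < q -> (q | a * b) -> (q / Z.gcd a q | b).
Proof.
  intros Hq Hd. set (G := Z.gcd a q). assert (HG : 0 < G) by (apply Z_gcd_pos_r, Hq).
  destruct (Z.gcd_divide_l a q) as [a1 Ha1]. destruct (Z.gcd_divide_r a q) as [q1 Hq1].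
  fold G in Ha1, Hq1.
  assert (Hq1e : q / G = q1) by (rewrite Hq1; apply Z.div_mul; lia).
  assert (Ha1e : a / G = a1) by (rewrite Ha1; apply Z.div_mul; lia).
  rewrite Hq1e. apply Z.gauss with a1.
  - rewrite Ha1, Hq1 in Hd. apply (Z.mul_divide_cancel_r _ _ G); [lia|].
    replace (a1 * b * G) with (a1 * G * b) by ring. exact Hd.
  - rewrite Z.gcd_comm, <- Hq1e, <- Ha1e. apply Z.gcd_div_gcd; [lia|reflexivity].
Qed.

Lemma length_same_residue_le (l : list nat) (E L : nat) : (0 < L)%nat -> NoDup l ->
  (forall x, In x l -> (x < E * L)%nat) ->
  (forall x y, In x l -> In y l -> x mod L = y mod L)%nat -> (length l <= E)%nat.
Proof.
  intros HL Hn Hb Hc.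
  rewrite <- (length_map (fun x => x / L)%nat).
  transitivity (length (seq 0 E)); [|rewrite length_seq; lia].
  apply NoDup_incl_length.
  - apply NoDup_map_NoDup_ForallPairs; auto. intros x y Hx Hy Hxy.
    rewrite (Nat.div_mod x L), (Nat.div_mod y L) by lia. rewrite Hxy, (Hc x y Hx Hy). reflexivity.
  - intros z Hz. apply in_map_iff in Hz as [x [<- Hxl]]. apply in_seq.
    split; [lia|]. apply Nat.Div0.div_lt_upper_bound. specialize (Hb x Hxl). lia.
Qed.

Definition sq_class (q h x : nat) : nat :=
  Z.to_nat (Z.gcd (Z.of_nat x - Z.of_nat h) (Z.of_nat q)).

Definition cogcd (q G : nat) : Z := Z.gcd (Z.of_nat G) (Z.of_nat q / Z.of_nat G).

Definition root_step (q G : nat) : nat := Z.to_nat (cogcd q G / Z.gcd (cogcd q G) 2).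

Lemma sq_class_in q h x : (0 < q)%nat -> In (sq_class q h x) (divisors_list q).
Proof.
  intros Hq. unfold sq_class, divisors_list.
  set (g := Z.gcd (Z.of_nat x - Z.of_nat h) (Z.of_nat q)).
  assert (Hg0 : 0 < g) by (apply Z_gcd_pos_r; lia).
  assert (Hgq : (g | Z.of_nat q)) by apply Z.gcd_divide_r.
  assert (Hle : g <= Z.of_nat q) by (apply Z.divide_pos_le; auto; lia).
  apply filter_In. split.
  - apply in_seq. lia.
  - apply Nat.eqb_eq, Nat2Z.inj. rewrite Nat2Z.inj_mod, Z2Nat.id by lia.
    apply Z.mod_divide; [lia|auto].
Qed.

(* [x^2 = h^2 (mod q)] splits as [x = h (mod G)] and [x = -h (mod q/G)], with [G = gcd(x-h, q)]. *)
Lemma sq_class_divides q h x : (0 < q)%nat -> sq_congr q h x = true ->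
  (Z.of_nat (sq_class q h x) | Z.of_nat x - Z.of_nat h) /\
  (Z.of_nat q / Z.of_nat (sq_class q h x) | Z.of_nat x + Z.of_nat h).
Proof.
  intros Hq Hs. unfold sq_congr in Hs. apply Z.eqb_eq, Z.mod_divide in Hs; [|lia].
  unfold sq_class. rewrite Z2Nat.id by apply Z.gcd_nonneg. split.
  - apply Z.gcd_divide_l.
  - apply Z_cofactor_divide; [lia|].
    rewrite !Nat2Z.inj_mul in Hs.
    replace ((Z.of_nat x - Z.of_nat h) * (Z.of_nat x + Z.of_nat h))
      with (- (Z.of_nat h * Z.of_nat h - Z.of_nat x * Z.of_nat x)) by ring.
    apply Z.divide_opp_r, Hs.
Qed.

Lemma cogcd_facts q G : In G (divisors_list q) ->
  0 < cogcd q G /\ (cogcd q G | Z.of_nat G) /\ (cogcd q G | Z.of_nat q / Z.of_nat G) /\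
  Z.of_nat G * (Z.of_nat q / Z.of_nat G) = Z.of_nat q.
Proof.
  intros HG. destruct (in_divisors_list q G HG) as [HG0 [k Hk]].
  assert (Hn : Z.of_nat q / Z.of_nat G = Z.of_nat k) by (rewrite Hk, Nat2Z.inj_mul; apply Z.div_mul; lia).
  assert (Hk0 : 0 < Z.of_nat k).
  { destruct k; simpl in Hk; lia. }
  unfold cogcd. rewrite Hn. repeat split.
  - apply Z_gcd_pos_r, Hk0.
  - apply Z.gcd_divide_l.
  - apply Z.gcd_divide_r.
  - rewrite Hk, Nat2Z.inj_mul. ring.
Qed.

Lemma lcm_cofactor q G : In G (divisors_list q) ->
  Z.lcm (Z.of_nat G) (Z.of_nat q / Z.of_nat G) * cogcd q G = Z.of_nat q.
Proof.
  intros HG. destruct (cogcd_facts q G HG) as [He [_ [[k Hk] HGn]]].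
  destruct (in_divisors_list q G HG) as [HG0 _].
  assert (Hn0 : 0 <= Z.of_nat q / Z.of_nat G) by (apply Z.div_pos; lia).
  assert (Hk0 : 0 <= k) by nia.
  unfold Z.lcm. fold (cogcd q G). rewrite Hk, Z.div_mul, Z.abs_eq by nia.
  rewrite <- HGn, Hk. ring.
Qed.

Lemma sq_class_size_le q h G : (0 < q)%nat -> In G (divisors_list q) ->
  (length (filter (fun x => sq_congr q h x && Nat.eqb (sq_class q h x) G) (seq 0 q))
    <= Z.to_nat (cogcd q G))%nat.
Proof.
  intros Hq HG. destruct (cogcd_facts q G HG) as [He _].
  assert (HL := lcm_cofactor q G HG).
  set (L := Z.lcm (Z.of_nat G) (Z.of_nat q / Z.of_nat G)) in HL.
  assert (HL0 : 0 < L) by nia.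
  apply (length_same_residue_le _ _ (Z.to_nat L)); [lia|apply NoDup_filter, seq_NoDup| |].
  - intros x Hx. apply filter_In, proj1, in_seq in Hx. nia.
  - intros x y Hx Hy. apply filter_In in Hx as [_ Hx], Hy as [_ Hy].
    apply andb_prop in Hx as [Hx Ex], Hy as [Hy Ey]. apply Nat.eqb_eq in Ex, Ey.
    destruct (sq_class_divides q h x Hq Hx) as [Hx1 Hx2].
    destruct (sq_class_divides q h y Hq Hy) as [Hy1 Hy2]. rewrite Ex in Hx1, Hx2. rewrite Ey in Hy1, Hy2.
    assert (Hd : (L | Z.of_nat x - Z.of_nat y)).
    { apply Z.lcm_least.
      - replace (Z.of_nat x - Z.of_nat y) with ((Z.of_nat x - Z.of_nat h) - (Z.of_nat y - Z.of_nat h)) by ring.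
        apply Z.divide_sub_r; auto.
      - replace (Z.of_nat x - Z.of_nat y) with ((Z.of_nat x + Z.of_nat h) - (Z.of_nat y + Z.of_nat h)) by ring.
        apply Z.divide_sub_r; auto. }
    destruct Hd as [k Hk]. apply Nat2Z.inj. rewrite !Nat2Z.inj_mod, Z2Nat.id by lia.
    replace (Z.of_nat x) with (Z.of_nat y + k * L) by lia. apply Z_mod_plus_full.
Qed.

Lemma sq_class_nonempty q h x G : (0 < q)%nat -> In G (divisors_list q) ->
  sq_congr q h x = true -> sq_class q h x = G -> (cogcd q G | 2 * Z.of_nat h).
Proof.
  intros Hq HG Hx <-. destruct (cogcd_facts q _ HG) as [_ [HeG [Hen _]]].
  destruct (sq_class_divides q h x Hq Hx) as [H1 H2].
  replace (2 * Z.of_nat h) with ((Z.of_nat x + Z.of_nat h) - (Z.of_nat x - Z.of_nat h)) by ring.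
  apply Z.divide_sub_r; [exact (Z.divide_trans _ _ _ Hen H2)|exact (Z.divide_trans _ _ _ HeG H1)].
Qed.

Lemma Z_div_gcd2_facts e : 0 < e ->
  0 < e / Z.gcd e 2 /\ e <= 2 * (e / Z.gcd e 2) /\ (e / Z.gcd e 2 | e) /\
  (forall k, (e | 2 * k) -> (e / Z.gcd e 2 | k)).
Proof.
  intros He. assert (Hg0 : 0 < Z.gcd e 2) by (apply Z_gcd_pos_r; lia).
  assert (Hg2 : Z.gcd e 2 <= 2) by (apply Z.divide_pos_le, Z.gcd_divide_r; lia).
  destruct (Z.gcd_divide_l e 2) as [m Hm].
  assert (Hd : e / Z.gcd e 2 = m) by (rewrite Hm at 1; apply Z.div_mul; lia).
  rewrite Hd. repeat split; [nia|nia|exists (Z.gcd e 2); lia|].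
  intros k Hk. rewrite <- Hd, Z.gcd_comm. apply Z_cofactor_divide; auto.
Qed.

Lemma Nat_divide_of_Z a b : (Z.of_nat a | Z.of_nat b) -> Nat.divide a b.
Proof.
  intros [k Hk]. destruct a as [|a].
  - exists 0%nat. lia.
  - assert (0 <= k) by nia. exists (Z.to_nat k). nia.
Qed.

Lemma root_step_facts q G : In G (divisors_list q) ->
  (0 < root_step q G)%nat /\ Nat.divide (root_step q G * root_step q G) q /\
  cogcd q G <= 2 * Z.of_nat (root_step q G) /\
  (forall h, (cogcd q G | 2 * Z.of_nat h) -> (h mod root_step q G = 0)%nat).
Proof.
  intros HG. destruct (cogcd_facts q G HG) as [He [HeG [Hen HGn]]].
  destruct (Z_div_gcd2_facts _ He) as [Hd0 [Hed [Hde Hdiv]]].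
  assert (Hd : Z.of_nat (root_step q G) = cogcd q G / Z.gcd (cogcd q G) 2)
    by (unfold root_step; rewrite Z2Nat.id; lia).
  rewrite <- Hd in Hd0, Hed, Hde, Hdiv. repeat split; [lia| | auto |].
  - apply Nat_divide_of_Z. rewrite Nat2Z.inj_mul, <- HGn.
    eapply Z.divide_trans; [apply Z.mul_divide_mono_l, (Z.divide_trans _ _ _ Hde Hen)|].
    apply Z.mul_divide_mono_r, (Z.divide_trans _ _ _ Hde HeG).
  - intros h Hh. apply Nat.Lcm0.mod_divide, Nat_divide_of_Z, Hdiv, Hh.
Qed.

End SquareRootCount.

Lemma sq_class_size_le_step q h G : (0 < q)%nat -> In G (divisors_list q) ->
  INR (length (filter (fun x => sq_congr q h x && Nat.eqb (sq_class q h x) G) (seq 0 q)))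
  <= 2 * INR (root_step q G) * (if Nat.eqb (h mod root_step q G) 0 then 1 else 0).
Proof.
  intros Hq HG. destruct (root_step_facts q G HG) as [_ [_ [Hed Hdiv]]].
  destruct (Zdivide_dec (cogcd q G) (2 * Z.of_nat h)) as [Hh|Hh].
  - rewrite (Hdiv h Hh), Nat.eqb_refl, Rmult_1_r.
    assert (Hlen := sq_class_size_le q h G Hq HG).
    destruct (cogcd_facts q G HG) as [He _].
    replace 2 with (INR 2) by reflexivity. rewrite <- mult_INR. apply le_INR. lia.
  - destruct (filter _ (seq 0 q)) as [|x l] eqn:E; [simpl; assert (Hd := pos_INR (root_step q G)); destruct (_ =? _)%nat; lra|].
    exfalso. assert (Hx : In x (filter (fun x => sq_congr q h x && Nat.eqb (sq_class q h x) G) (seq 0 q)))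
      by (rewrite E; left; reflexivity).
    apply filter_In in Hx as [_ Hx]. apply andb_prop in Hx as [Hx1 Hx2].
    apply Hh, (sq_class_nonempty q h x G); auto. apply Nat.eqb_eq, Hx2.
Qed.


Lemma sq_root_count_le q h : (0 < q)%nat ->
  rsum q (fun x => if sq_congr q h x then 1 else 0) <=
  lsum (divisors_list q) (fun G =>
    2 * INR (root_step q G) * (if Nat.eqb (h mod root_step q G) 0 then 1 else 0)).
Proof.
  intros Hq. apply Rle_trans with (rsum q (fun x => lsum (divisors_list q) (fun G =>
    if sq_congr q h x && Nat.eqb (sq_class q h x) G then 1 else 0))).
  - apply rsum_le; intros x _. destruct (sq_congr q h x); simpl.
    + apply Rle_trans with (if Nat.eqb (sq_class q h x) (sq_class q h x) then 1 else 0);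
        [rewrite Nat.eqb_refl; lra|].
      apply (lsum_ge_term _ (fun G => if Nat.eqb (sq_class q h x) G then 1 else 0));
        [intros; destruct (_ =? _)%nat; lra|apply sq_class_in; auto].
    + apply lsum_nonneg. intros; lra.
  - rewrite rsum_lsum. apply lsum_le; intros G HG.
    rewrite rsum_indicator. apply sq_class_size_le_step; auto.
Qed.

(** * Reduction to Riemann sums *)

Lemma rsum_multiples d m (w : nat -> R) : (0 < d)%nat ->
  rsum (d * m) (fun h => if Nat.eqb (h mod d) 0 then w h else 0) = rsum m (fun j => w (j * d)%nat).
Proof.
  intros Hd. induction m; [rewrite Nat.mul_0_r; reflexivity|].
  replace (d * S m)%nat with (d * m + S (d - 1))%nat by lia.
  rewrite rsum_add, IHm, rsum_Sl. simpl rsum at 3. f_equal.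
  rewrite (rsum_ext _ _ (fun _ => 0)), rsum_0.
  - rewrite Nat.add_0_r, Nat.mul_comm, Nat.Div0.mod_mul, Nat.eqb_refl. ring.
  - intros i Hi. replace ((d * m + S i) mod d)%nat with (S i).
    + destruct (Nat.eqb_spec (S i) 0); [lia|reflexivity].
    + rewrite Nat.add_comm, Nat.mul_comm, Nat.Div0.mod_add, Nat.mod_small; lia.
Qed.

Definition riemann_avg (F : R -> R) (m : nat) : R := rsum m (fun j => F (INR j / INR m)) / INR m.

Lemma root_step_cofactor q G : In G (divisors_list q) ->
  q = (root_step q G * (q / root_step q G))%nat /\ (q <= (q / root_step q G) * (q / root_step q G))%nat.
Proof.
  intros HG. destruct (root_step_facts q G HG) as [Hd0 [[k Hk] _]].
  set (d := root_step q G) in *.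
  assert (Hqd : (q / d = k * d)%nat) by (rewrite Hk, Nat.mul_assoc, Nat.div_mul; lia).
  rewrite Hqd. split; [lia|].
  destruct (in_divisors_list q G HG) as [[HG0 HGq] _]. destruct k; nia.
Qed.

Lemma divisor_term_eq (phi : R -> C) q G : In G (divisors_list q) ->
  rsum q (fun h => Cmod (phi (INR h / INR q)) ^ 2 *
    (2 * INR (root_step q G) * (if Nat.eqb (h mod root_step q G) 0 then 1 else 0)))
  = 2 * INR q * riemann_avg (fun x => Cmod (phi x) ^ 2) (q / root_step q G).
Proof.
  intros HG. destruct (root_step_facts q G HG) as [Hd0 _].
  destruct (root_step_cofactor q G HG) as [Hq _].
  set (d := root_step q G) in *. set (m := (q / d)%nat) in *.
  assert (Hm0 : (0 < m)%nat) by (destruct (in_divisors_list q G HG); nia).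
  clearbody d m. clear HG. subst q.
  transitivity (2 * INR d * rsum (d * m) (fun h =>
    if Nat.eqb (h mod d) 0 then Cmod (phi (INR h / INR (d * m))) ^ 2 else 0)).
  - rewrite <- rsum_scal. apply rsum_ext; intros h _. destruct (Nat.eqb _ 0); ring.
  - rewrite rsum_multiples by auto. unfold riemann_avg. rewrite mult_INR.
    assert (INR d <> 0) by (apply not_0_INR; lia). assert (INR m <> 0) by (apply not_0_INR; lia).
    replace (rsum m _) with (rsum m (fun j => Cmod (phi (INR j / INR m)) ^ 2)); [field; auto|].
    apply rsum_ext; intros j _. rewrite mult_INR. do 3 f_equal. field. auto.
Qed.

Lemma gauss_moment_le_riemann (phi : R -> C) q : (0 < q)%nat ->
  rsum q (fun p => Cmod (gauss phi p q) ^ 2) <=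
  2 * INR q ^ 2 * lsum (divisors_list q) (fun G =>
    riemann_avg (fun x => Cmod (phi x) ^ 2) (q / root_step q G)).
Proof.
  intros Hq. set (a := fun h => Cmod (phi (INR h / INR q))).
  eapply Rle_trans; [apply gauss_moment_le_pairs; auto|].
  replace (2 * INR q ^ 2 * _) with (INR q * lsum (divisors_list q) (fun G =>
    2 * INR q * riemann_avg (fun x => Cmod (phi x) ^ 2) (q / root_step q G)))
    by (rewrite lsum_scal; ring).
  apply Rmult_le_compat_l; [apply pos_INR|].
  eapply Rle_trans; [apply (rsum_sym_pairs_le _ _ a), sq_congr_sym|].
  apply Rle_trans with (rsum q (fun h => lsum (divisors_list q) (fun G => a h ^ 2 *
    (2 * INR (root_step q G) * (if Nat.eqb (h mod root_step q G) 0 then 1 else 0))))).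
  - apply rsum_le; intros h _. rewrite lsum_scal.
    apply Rmult_le_compat_l; [apply pow2_ge_0|apply sq_root_count_le; auto].
  - rewrite rsum_lsum. right. apply lsum_ext; intros G HG. apply divisor_term_eq, HG.
Qed.

(** * Riemann sums and square integrability *)

Lemma Riemann_sum_left_iota (F : R -> R) (g : nat -> R) (n s : nat) :
  Riemann_sum F (SF_seq_f2 (fun x _ => x) (seq.map g (seq.iota s (S (S n))))) =
  rsum (S n) (fun i => (g (S (s + i)) - g (s + i)%nat) * F (g (s + i)%nat)).
Proof.
  revert s; induction n; intros s.
  - unfold Riemann_sum; simpl. rewrite Nat.add_0_r, plus_zero_r.
    unfold scal; simpl; unfold mult; simpl. ring.
  - change (seq.map g (seq.iota s (S (S (S n)))))
      with (g s :: seq.map g (seq.iota (S s) (S (S n))))%list.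
    rewrite SF_cons_f2 by (simpl; lia).
    rewrite Riemann_sum_cons, IHn, (rsum_Sl (S n)). cbn -[rsum]. rewrite Nat.add_0_r.
    unfold plus, scal, mult; cbn -[rsum]. f_equal.
    apply rsum_ext; intros i _. rewrite !Nat.add_succ_r. reflexivity.
Qed.

Lemma Riemann_sum_unif_part (F : R -> R) (n : nat) :
  Riemann_sum F (SF_seq_f2 (fun x _ => x) (unif_part 0 1 n)) = riemann_avg F (S n).
Proof.
  unfold unif_part, seq.mkseq. rewrite Riemann_sum_left_iota. simpl (0 + _)%nat.
  assert (Hn : INR (S n) <> 0) by (apply not_0_INR; lia).
  unfold riemann_avg, Rdiv. rewrite Rmult_comm, <- rsum_scal. apply rsum_ext.
  intros i _. rewrite !S_INR in *. f_equal; [field; auto|f_equal; field; auto].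
Qed.

Lemma riemann_avg_cvg (F : R -> R) (I : R) : is_RInt F 0 1 I ->
  forall eps, 0 < eps -> exists M : nat, forall m, (M <= m)%nat ->
    Rabs (riemann_avg F m - I) < eps.
Proof.
  intros HI eps Heps.
  specialize (HI _ (locally_ball I (mkposreal _ Heps))).
  destruct HI as [delta Hd].
  destruct (nfloor_ex (/ delta)) as [k Hk]; [left; apply Rinv_0_lt_compat, cond_pos|].
  exists (S (S k)). intros m Hm. destruct m as [|n]; [lia|].
  rewrite <- Riemann_sum_unif_part.
  destruct (Riemann_fine_unif_part (fun x _ => x) 0 1 n) as [Hstep [Hptd [Hh Hlast]]];
    [intros; lra|lra|].
  assert (Hn : INR (S k) <= INR n) by (apply le_INR; lia). rewrite S_INR in Hn.
  assert (Hd0 := cond_pos delta). assert (Hk0 := pos_INR k).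
  refine (_ (Hd (SF_seq_f2 (fun x _ => x) (unif_part 0 1 n)) _ _)).
  - unfold ball; simpl. unfold AbsRing_ball, abs, minus, plus, opp, scal; simpl; unfold mult; simpl.
    rewrite Rminus_0_r, (sign_eq_1 1), Rmult_1_l by lra. auto.
  - eapply Rle_lt_trans; [exact Hstep|].
    replace ((1 - 0) / (INR n + 1)) with (/ (INR n + 1)) by (field; lra).
    rewrite <- (Rinv_inv delta). apply Rinv_lt_contravar; [|lra].
    apply Rmult_lt_0_compat; [apply Rinv_0_lt_compat|]; lra.
  - rewrite Rmin_left, Rmax_right by lra. auto.
Qed.

Lemma IsStepFun_comp (a b : R) (h : R -> R) (f : StepFun a b) :
  IsStepFun (fun x => h (f x)) a b.
Proof.
  exists (subdivision f), (map h (subdivision_val f)).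
  destruct (StepFun_P1 f) as [Hsort [Hhd [Hlast [Hlen Hconst]]]].
  repeat split; try assumption.
  - rewrite Hlen, RList_P18. reflexivity.
  - intros i Hi x Hx. unfold constant_D_eq, open_interval in Hconst.
    rewrite (Hconst _ Hi _ Hx), RList_P12; [reflexivity|].
    rewrite Hlen in Hi; simpl in Hi; exact Hi.
Qed.

Definition clamp (M y : R) : R := Rmax (- M) (Rmin M y).

(* Approximate [f^2] by [(clamp M phi)^2], with error at most [2 M |f - phi|]. *)
Lemma Riemann_integrable_sqr (f : R -> R) (a b M : R) :
  0 < M -> (forall t, Rmin a b <= t <= Rmax a b -> Rabs (f t) <= M) ->
  Riemann_integrable f a b -> Riemann_integrable (fun x => f x * f x) a b.
Proof.
  intros HM Hb Hf eps.
  assert (He : 0 < eps / (2 * M)) by (apply Rdiv_lt_0_compat; [apply cond_pos|lra]).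
  destruct (Hf (mkposreal _ He)) as [phi [psi [Happrox Hpsi]]].
  exists (mkStepFun (IsStepFun_comp a b (fun y => clamp M y * clamp M y) phi)).
  exists (mkStepFun (StepFun_P28 (2 * M) (mkStepFun (StepFun_P4 a b 0)) psi)).
  split.
  - intros t Ht. simpl. unfold fct_cte.
    specialize (Happrox t Ht). specialize (Hb t Ht). apply Rabs_le_between in Hb.
    set (c := clamp M (phi t)).
    assert (Hc1 : Rabs (f t - c) <= Rabs (f t - phi t)).
    { unfold c, clamp, Rmax, Rmin; repeat destruct Rle_dec; unfold Rabs; repeat destruct Rcase_abs; lra. }
    assert (Hc2 : Rabs (f t + c) <= 2 * M).
    { unfold c, clamp, Rmax, Rmin; repeat destruct Rle_dec; unfold Rabs; repeat destruct Rcase_abs; lra. }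
    replace (f t * f t - c * c) with ((f t - c) * (f t + c)) by ring.
    rewrite Rabs_mult. apply Rle_trans with (psi t * (2 * M)); [|lra].
    apply Rmult_le_compat; try apply Rabs_pos; lra.
  - rewrite StepFun_P30, StepFun_P18, Rmult_0_l, Rplus_0_l, Rabs_mult, (Rabs_right (2 * M)) by lra.
    simpl in Hpsi. apply Rlt_le_trans with (2 * M * (eps / (2 * M))).
    + apply Rmult_lt_compat_l; lra.
    + right; field; lra.
Qed.

Lemma ex_RInt_Cmod_sqr (phi : R -> C) : ex_RInt phi 0 1 ->
  ex_RInt (fun x => Cmod (phi x) ^ 2) 0 1.
Proof.
  intros H. destruct (ex_RInt_ub phi 0 1 H) as [M HM].
  set (M' := Rmax 1 M). assert (HM'0 : 0 < M') by (unfold M'; generalize (Rmax_l 1 M); lra).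
  assert (Hbd : forall t, Rmin 0 1 <= t <= Rmax 0 1 -> Rmax (Rabs (fst (phi t))) (Rabs (snd (phi t))) <= M').
  { intros t Ht. eapply Rle_trans; [apply Rmax_Cmod|]. rewrite Cmod_norm.
    eapply Rle_trans; [apply HM; auto|apply Rmax_r]. }
  assert (Hre : Riemann_integrable (fun t => fst (phi t) * fst (phi t)) 0 1).
  { apply (Riemann_integrable_sqr _ _ _ M' HM'0);
      [intros t Ht; eapply Rle_trans; [apply Rmax_l|apply (Hbd t Ht)]|].
    apply ex_RInt_Reals_0, (ex_RInt_fct_extend_fst (U:=R_NormedModule) (V:=R_NormedModule)), H. }
  assert (Him : Riemann_integrable (fun t => snd (phi t) * snd (phi t)) 0 1).
  { apply (Riemann_integrable_sqr _ _ _ M' HM'0);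
      [intros t Ht; eapply Rle_trans; [apply Rmax_r|apply (Hbd t Ht)]|].
    apply ex_RInt_Reals_0, (ex_RInt_fct_extend_snd (U:=R_NormedModule) (V:=R_NormedModule)), H. }
  eapply ex_RInt_ext; [|apply ex_RInt_Reals_1, (RiemannInt_P10 1 Hre Him)].
  intros x _. change (fst (phi x) * fst (phi x) + 1 * (snd (phi x) * snd (phi x)) = Cmod (phi x) ^ 2).
  rewrite Cmod2_alt. unfold Re, Im. ring.
Qed.

(** * Euler's totient *)

Module TotientBound.
Import ssreflect ssrbool eqtype ssrnat seq div prime bigop.
Local Open Scope nat_scope.

Lemma modn_Nat_mod (q d : nat) : 0 < d -> q %% d = Nat.modulo q d.
Proof.
  move=> Hd. apply: (Nat.mod_unique q d (q %/ d) (q %% d)).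
  - apply/ltP. by rewrite ltn_pmod.
  - rewrite {1}(divn_eq q d) -multE -plusE. lia.
Qed.

Lemma dvdn_Nat_divide d n : (d %| n) <-> Nat.divide d n.
Proof. split; [by move/dvdnP | by move=> H; apply/dvdnP]. Qed.

Lemma gcdn_Nat_gcd (a b : nat) : Nat.gcd a b = gcdn a b.
Proof.
  apply: Nat.gcd_unique.
  - apply/dvdn_Nat_divide. exact: dvdn_gcdl.
  - apply/dvdn_Nat_divide. exact: dvdn_gcdr.
  - move=> c /dvdn_Nat_divide H1 /dvdn_Nat_divide H2. apply/dvdn_Nat_divide. by rewrite dvdn_gcd H1 H2.
Qed.

Lemma length_filter_seq (P : pred nat) a n : length (List.filter P (List.seq a n)) = count P (iota a n).
Proof. by elim: n a => //= n IH a; rewrite -IH; case: (P a). Qed.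

Lemma ndiv_count q : 0 < q -> ndiv q = count (fun d => d %| q) (iota 1 q).
Proof.
  move=> Hq. rewrite /ndiv length_filter_seq. apply: eq_in_count => d.
  rewrite mem_iota => /andP [Hd _]. by rewrite /dvdn modn_Nat_mod.
Qed.

Lemma eulerphi_totient q : 1 < q -> eulerphi q = totient q.
Proof.
  move=> Hq. rewrite totient_count_coprime /eulerphi /units_list length_filter_seq.
  have -> : \sum_(0 <= i < q) (coprime q i : nat) = count (coprime q) (iota 0 q).
  { rewrite /index_iota subn0. elim: (iota 0 q) => [|x s IH]; first by rewrite big_nil.
    rewrite big_cons IH /=. by case: (coprime q x). }
  case: q Hq => [|[|r]] // _.
  have -> : iota 1 r.+2 = iota 1 r.+1 ++ [:: r.+2].
  { by rewrite -(addn1 r.+1) iotaD /= addnC. }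
  have -> : iota 0 r.+2 = 0 :: iota 1 r.+1 by [].
  have Hq : (Nat.gcd r.+2 r.+2 =? 1) = false by rewrite Nat.gcd_diag.
  have H0 : coprime r.+2 0 = false by rewrite /coprime gcdn0.
  have Hc : forall (a : pred nat) x s, count a (x :: s) = a x + count a s by [].
  have Hn : forall (a : pred nat), count a [::] = 0 by [].
  rewrite count_cat (Hc _ 0) (Hc _ r.+2) Hn Hq H0 add0n !addn0.
  apply: eq_in_count => x _.
  rewrite /= gcdn_Nat_gcd gcdnC /coprime.
  by case: (Nat.eqb_spec (gcdn r.+2 x) 1) => [->|/eqP /negbTE ->].
Qed.

Lemma size_primes_le_ndiv q : 0 < q -> size (primes q) <= ndiv q.
Proof.
  move=> Hq. rewrite ndiv_count // -size_filter.
  apply: uniq_leq_size; first exact: primes_uniq.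
  move=> p. rewrite mem_primes mem_filter mem_iota => /and3P [pp _ pq].
  rewrite pq /= prime_gt0 //= add1n ltnS. exact: dvdn_leq.
Qed.

(* phi(q) = q * prod_(p | q) (1 - 1/p) and each factor is at least 1/2. *)
Lemma le_pow2_size_primes_totient q : 0 < q -> q <= 2 ^ size (primes q) * totient q.
Proof.
  move=> Hq. rewrite totientE // {1}(prod_prime_decomp Hq) prime_decompE big_map /=.
  have -> : 2 ^ size (primes q) = \prod_(p <- primes q) 2.
  { rewrite big_const_seq count_predT. by elim: (size _) => //= n IH; rewrite expnS -IH. }
  rewrite -big_split /= big_seq_cond [X in _ <= X]big_seq_cond.
  apply: leq_prod => p /andP [Hp _].
  have pp : prime p by move: Hp; rewrite mem_primes => /andP [].
  have He : 0 < logn p q by rewrite logn_gt0.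
  have Hp2 := prime_gt1 pp.
  case: (logn p q) He => // e _ /=.
  rewrite expnS mulnA. apply: leq_mul => //.
  case: p Hp2 {Hp pp} => // p Hp2 /=. rewrite mul2n -addnn -(addn1 p) leq_add2l. exact: Hp2.
Qed.

Lemma le_pow2_ndiv_eulerphi q : (1 < q)%coq_nat -> (q <= Nat.pow 2 (ndiv q) * eulerphi q)%coq_nat.
Proof.
  move=> /ltP Hq. apply/leP. have Hq0 : 0 < q by apply: ltnW.
  have -> : Nat.pow 2 (ndiv q) = 2 ^ ndiv q by elim: (ndiv q) => // n IH; rewrite expnS -IH.
  rewrite eulerphi_totient //. apply: leq_trans (le_pow2_size_primes_totient q Hq0) _.
  by rewrite leq_mul2r leq_pexp2l ?size_primes_le_ndiv ?orbT.
Qed.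
End TotientBound.

Lemma units_list_filter q : (2 <= q)%nat ->
  units_list q = filter (fun p => Nat.eqb (Nat.gcd p q) 1) (seq 0 q).
Proof.
  intros Hq. destruct q as [|[|r]]; [lia|lia|].
  unfold units_list. rewrite seq_S. change (seq 0 (S (S r))) with (0%nat :: seq 1 (S r)).
  rewrite filter_app. replace (1 + S r)%nat with (S (S r)) by lia.
  cbn [filter]. rewrite Nat.gcd_diag, Nat.gcd_0_l. apply app_nil_r.
Qed.

Lemma large_count_mul_le (phi : R -> C) K q : 0 <= K -> (2 <= q)%nat ->
  INR (large_count phi K q) * (K ^ 2 * INR q) <= rsum q (fun p => Cmod (gauss phi p q) ^ 2).
Proof.
  intros HK Hq. assert (Hsq : 0 < sqrt (INR q)) by (apply sqrt_lt_R0, lt_0_INR; lia).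
  unfold large_count. rewrite units_list_filter, <- lsum_seq by auto.
  eapply Rle_trans; [|apply lsum_filter_le; intros; apply pow2_ge_0].
  apply length_filter_mul_le; [intros; apply pow2_ge_0|].
  intros p Hp. destruct (Rlt_dec K (Cmod (gauss phi p q) / sqrt (INR q))) as [Hlt|]; [|discriminate].
  apply (Rmult_lt_compat_r (sqrt (INR q))) in Hlt; auto.
  unfold Rdiv in Hlt. rewrite Rmult_assoc, Rinv_l, Rmult_1_r in Hlt by lra.
  replace (K ^ 2 * INR q) with ((K * sqrt (INR q)) ^ 2)
    by (rewrite Rpow_mult_distr, pow2_sqrt; [ring|apply pos_INR]).
  apply pow_incr. split; [|lra]. apply Rmult_le_pos; lra.
Qed.

(* Each Riemann sum above has [q / root_step q G >= sqrt q] points. *)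
Lemma gauss_moment_le (phi : R -> C) q c : (0 < q)%nat ->
  (forall m, (q <= m * m)%nat -> riemann_avg (fun x => Cmod (phi x) ^ 2) m <= c) ->
  rsum q (fun p => Cmod (gauss phi p q) ^ 2) <= 2 * INR (ndiv q) * INR q ^ 2 * c.
Proof.
  intros Hq Hc. eapply Rle_trans; [apply gauss_moment_le_riemann; auto|].
  replace (2 * INR (ndiv q) * INR q ^ 2 * c) with (2 * INR q ^ 2 * (INR (ndiv q) * c)) by ring.
  apply Rmult_le_compat_l; [assert (0 <= INR q ^ 2) by apply pow2_ge_0; lra|].
  rewrite ndiv_length. apply lsum_le_length. intros G HG. apply Hc, (root_step_cofactor q G HG).
Qed.

Lemma large_count_ratio_le (phi : R -> C) K N q c : 0 < K -> (2 <= q)%nat -> (ndiv q <= N)%nat ->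
  0 <= c -> (forall m, (q <= m * m)%nat -> riemann_avg (fun x => Cmod (phi x) ^ 2) m <= c) ->
  INR (large_count phi K q) / INR (eulerphi q) <= 2 * INR N * 2 ^ N * c / K ^ 2.
Proof.
  intros HK Hq Hnd Hc0 Havg.
  assert (Hmoment := gauss_moment_le phi q c ltac:(lia) Havg).
  assert (Hcount := large_count_mul_le phi K q ltac:(lra) Hq).
  assert (Hphi : INR q <= 2 ^ N * INR (eulerphi q)).
  { apply Rle_trans with (2 ^ ndiv q * INR (eulerphi q)).
    - rewrite <- (pow_INR 2), <- mult_INR. apply le_INR, TotientBound.le_pow2_ndiv_eulerphi. lia.
    - apply Rmult_le_compat_r; [apply pos_INR|apply Rle_pow; [lra|exact Hnd]]. }
  assert (HndN : INR (ndiv q) <= INR N) by (apply le_INR, Hnd).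
  assert (Hq0 : 0 < INR q) by (apply lt_0_INR; lia).
  assert (HK2 : 0 < K ^ 2) by (apply pow_lt, HK).
  set (cnt := INR (large_count phi K q)) in *. set (ph := INR (eulerphi q)) in *.
  assert (Hph0 : 0 < ph) by (assert (0 < 2 ^ N) by (apply pow_lt; lra); nra).
  assert (Hc : cnt * K ^ 2 <= 2 * INR N * 2 ^ N * ph * c).
  { apply (Rmult_le_reg_l (INR q)); auto.
    apply Rle_trans with (INR q * (2 * c) * (INR (ndiv q) * INR q)).
    { replace (INR q * (cnt * K ^ 2)) with (cnt * (K ^ 2 * INR q)) by ring.
      replace (INR q * (2 * c) * (INR (ndiv q) * INR q))
        with (2 * INR (ndiv q) * INR q ^ 2 * c) by ring. lra. }
    replace (INR q * (2 * INR N * 2 ^ N * ph * c)) with (INR q * (2 * c) * (INR N * (2 ^ N * ph)))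
      by ring.
    apply Rmult_le_compat_l; [nra|]. apply Rmult_le_compat; auto using pos_INR. }
  apply (Rmult_le_reg_r (ph * K ^ 2)); [nra|].
  replace (cnt / ph * (ph * K ^ 2)) with (cnt * K ^ 2) by (field; lra).
  replace (2 * INR N * 2 ^ N * c / K ^ 2 * (ph * K ^ 2)) with (2 * INR N * 2 ^ N * ph * c)
    by (field; lra).
  exact Hc.
Qed.

Lemma L2sq_nonneg (phi : R -> C) : ex_RInt phi 0 1 -> 0 <= L2sq phi.
Proof.
  intros H. apply RInt_ge_0; [lra|apply ex_RInt_Cmod_sqr, H|intros; apply pow2_ge_0].
Qed.

Theorem lemma6p1 (N : nat) (HN : (0 < N)%nat) :
  forall eps : R, 0 < eps ->
  exists K : R, 0 < K /\
  forall phi : R -> C,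
    periodic1 phi ->
    ex_RInt phi 0 1 ->
    forall delta : R, 0 < delta ->
    exists Q : nat, forall q : nat, (Q <= q)%nat -> (ndiv q <= N)%nat ->
      INR (large_count phi K q) / INR (eulerphi q) <= eps * L2sq phi + delta.
Proof.
  intros eps Heps.
  set (K2 := 2 * INR N * 2 ^ N / eps).
  assert (HK2 : 0 < K2).
  { assert (0 < INR N) by (apply lt_0_INR, HN). assert (0 < 2 ^ N) by (apply pow_lt; lra).
    unfold K2. apply Rdiv_lt_0_compat; [nra|exact Heps]. }
  exists (sqrt K2). split; [apply sqrt_lt_R0, HK2|].
  intros phi _ Hint delta Hdelta.
  assert (Hde : 0 < delta / eps) by (apply Rdiv_lt_0_compat; auto).
  destruct (riemann_avg_cvg _ _ (RInt_correct _ _ _ (ex_RInt_Cmod_sqr phi Hint)) _ Hde) as [M HM].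
  exists (Nat.max 2 (M * M)). intros q Hq Hnd.
  assert (HI0 := L2sq_nonneg phi Hint).
  eapply Rle_trans; [apply (large_count_ratio_le phi _ N q (L2sq phi + delta / eps))|].
  - apply sqrt_lt_R0, HK2.
  - lia.
  - exact Hnd.
  - lra.
  - intros m Hm. assert (HMm : (M <= m)%nat) by nia.
    specialize (HM m HMm). apply Rabs_def2 in HM. unfold L2sq. lra.
  - rewrite pow2_sqrt by lra. right. unfold K2. field.
    split; [lra|split; [apply pow_nonzero; lra|apply not_0_INR; lia]].
Qed.
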